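(* Let $d,a,b$ be positive integers, $r=(d+2b)/d$, $R=(a+d)/d$, with $R\ge3r$, and let $x_1$ be as in the context. Then $\rho:=x_1-r$ satisfies $\rho<\frac{r-1}{2}$.
   Context: For $t\in\mathbb C\setminus\{\pm1,\pm r\}$ let $\Phi(t)=d\log|t+r|-d\log|t-r|+(a+d)(\log|t-1|-\log|t+1|)$. Under $R\ge3r$ there is a unique $x_1\in(r,\infty)$ with $\Phi(x_1)=0$; moreover $\Phi>0$ on $(r,x_1)$ and $\Phi<0$ on $(x_1,\infty)$. *)

From Stdlib Require Import Reals Lra.
Open Scope R_scope.

Definition r_of (d b : nat) : R := (INR d + 2 * INR b) / INR d.
Definition R_of (d a : nat) : R := (INR a + INR d) / INR d.

(* Phi(t) = d log|t+r| - d log|t-r| + (a+d)(log|t-1| - log|t+1|),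
   restricted to real t (the statement only concerns t in (r, oo)). *)
Definition Phi (d a b : nat) (t : R) : R :=
  INR d * ln (Rabs (t + r_of d b)) - INR d * ln (Rabs (t - r_of d b))
  + (INR a + INR d) * (ln (Rabs (t - 1)) - ln (Rabs (t + 1))).

(* Write [y = 2r/(t-r)] and [x = 2/(t-1)], so that
   [Phi(t) = d (ln(1+y) - R ln(1+x))] for [t > r].  Once [t >= (3r-1)/2] we
   have [y <= 3r x], and strict concavity of [ln] gives
   [ln(1 + 3r x) < 3r ln(1+x) <= R ln(1+x)]; hence [Phi < 0] there, and the zero
   [x1] of [Phi] must lie below [(3r-1)/2 = r + (r-1)/2]. *)

From Stdlib Require Import Reals Lra.
Open Scope R_scope.

Lemma ln_lt_sub_1 (u : R) : 0 < u -> u <> 1 -> ln u < u - 1.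
Proof.
  intros Hu Hu1. rewrite <- (ln_exp (u - 1)).
  apply ln_increasing; [exact Hu|].
  pose proof (exp_ineq1 (u - 1) ltac:(lra)). lra.
Qed.

Lemma ln_le_sub_1 (u : R) : 0 < u -> ln u <= u - 1.
Proof.
  intros Hu. destruct (Req_dec u 1) as [->|Hu1].
  - rewrite ln_1. lra.
  - left. exact (ln_lt_sub_1 u Hu Hu1).
Qed.

Lemma ln_ge_1_sub_inv (u : R) : 0 < u -> 1 - / u <= ln u.
Proof.
  intros Hu.
  pose proof (ln_le_sub_1 (/ u) (Rinv_0_lt_compat u Hu)) as H.
  rewrite ln_Rinv in H by exact Hu. lra.
Qed.

Lemma ln_div (u v : R) : 0 < u -> 0 < v -> ln (u / v) = ln u - ln v.
Proof.
  intros Hu Hv. unfold Rdiv.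
  rewrite ln_mult, ln_Rinv by (auto using Rinv_0_lt_compat). ring.
Qed.

Lemma ln_1_plus_mul_lt (p x : R) : 0 < x -> 1 < p -> ln (1 + p * x) < p * ln (1 + x).
Proof.
  intros Hx Hp.
  assert (Hpx : x < p * x) by nra.
  assert (Hq : 1 < (1 + p * x) / (1 + x)).
  { apply (Rmult_lt_reg_r (1 + x)); [lra|].
    unfold Rdiv. rewrite Rmult_assoc, Rinv_l; lra. }
  assert (Hsplit : ln (1 + p * x) = ln (1 + x) + ln ((1 + p * x) / (1 + x))).
  { rewrite ln_div by lra. ring. }
  assert (Hquot : ln ((1 + p * x) / (1 + x)) < (p - 1) * (1 - / (1 + x))).
  { replace ((p - 1) * (1 - / (1 + x))) with ((1 + p * x) / (1 + x) - 1)
      by (field; lra).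
    apply ln_lt_sub_1; lra. }
  assert ((p - 1) * (1 - / (1 + x)) <= (p - 1) * ln (1 + x)).
  { apply Rmult_le_compat_l; [lra|]. apply ln_ge_1_sub_inv. lra. }
  lra.
Qed.

Lemma ln_ratio_lt (r c t : R) :
  1 < r -> 3 * r <= c -> (3 * r - 1) / 2 <= t ->
  ln ((t + r) / (t - r)) < c * ln ((t + 1) / (t - 1)).
Proof.
  intros Hr Hc Ht.
  set (x := 2 / (t - 1)).
  assert (Hx : 0 < x) by (unfold x; apply Rdiv_lt_0_compat; lra).
  assert (Ex : (t + 1) / (t - 1) = 1 + x) by (unfold x; field; lra).
  (* [(t+r)/(t-r) = 1 + 2r/(t-r)] and [2r/(t-r) <= 3r x] iff [3r - 1 <= 2t]. *)
  assert (Hratio : (t + r) / (t - r) <= 1 + 3 * r * x).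
  { unfold x. apply (Rmult_le_reg_r ((t - r) * (t - 1))); [nra|].
    replace ((t + r) / (t - r) * ((t - r) * (t - 1))) with ((t + r) * (t - 1))
      by (field; lra).
    replace ((1 + 3 * r * (2 / (t - 1))) * ((t - r) * (t - 1)))
      with ((t - r) * (t - 1) + 6 * r * (t - r)) by (field; lra).
    nra. }
  assert (Hmono : ln ((t + r) / (t - r)) <= ln (1 + 3 * r * x)).
  { destruct Hratio as [Hlt|Heq].
    - left. apply ln_increasing; [apply Rdiv_lt_0_compat|]; lra.
    - rewrite Heq. lra. }
  pose proof (ln_1_plus_mul_lt (3 * r) x Hx ltac:(lra)) as Hconc.
  assert (Hpos : 0 < ln (1 + x)) by (rewrite <- ln_1; apply ln_increasing; lra).
  rewrite Ex. nra.
Qed.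

Lemma r_of_gt_1 (d b : nat) : (0 < d)%nat -> (0 < b)%nat -> 1 < r_of d b.
Proof.
  intros hd hb.
  assert (Hd : 0 < INR d) by (apply lt_0_INR; exact hd).
  assert (Hb : 0 < INR b) by (apply lt_0_INR; exact hb).
  unfold r_of. apply (Rmult_lt_reg_r (INR d)); [exact Hd|].
  unfold Rdiv. rewrite Rmult_assoc, Rinv_l; lra.
Qed.

Lemma Phi_ratio (d a b : nat) (t : R) : (0 < d)%nat -> (0 < b)%nat -> r_of d b < t ->
  Phi d a b t =
  INR d * (ln ((t + r_of d b) / (t - r_of d b)) - R_of d a * ln ((t + 1) / (t - 1))).
Proof.
  intros hd hb Ht.
  pose proof (r_of_gt_1 d b hd hb) as Hr.
  assert (Hd : 0 < INR d) by (apply lt_0_INR; exact hd).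
  unfold Phi.
  rewrite !Rabs_pos_eq by lra.
  rewrite !ln_div by lra.
  unfold R_of. field. lra.
Qed.

Lemma Phi_neg (d a b : nat) (t : R) : (0 < d)%nat -> (0 < b)%nat ->
  3 * r_of d b <= R_of d a -> (3 * r_of d b - 1) / 2 <= t -> Phi d a b t < 0.
Proof.
  intros hd hb HR Ht.
  pose proof (r_of_gt_1 d b hd hb) as Hr.
  assert (Hd : 0 < INR d) by (apply lt_0_INR; exact hd).
  rewrite Phi_ratio by (auto; lra).
  pose proof (ln_ratio_lt (r_of d b) (R_of d a) t Hr HR Ht).
  nra.
Qed.

Theorem lemma4p10 (d a b : nat) (hd : (0 < d)%nat) (ha : (0 < a)%nat) (hb : (0 < b)%nat)
  (hR : R_of d a >= 3 * r_of d b)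
  (x1 : R) (hx1 : r_of d b < x1) (hPhi : Phi d a b x1 = 0) :
  x1 - r_of d b < (r_of d b - 1) / 2.
Proof.
  apply Rnot_le_lt. intros Hfar.
  assert (Phi d a b x1 < 0) by (apply Phi_neg; auto; lra).
  lra.
Qed.
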